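(* Let $P$ be a probability distribution over a finite set of at least two items $\mathcal{I}=\{1,2,\dots\}$ with $P(1)>P(2)>0$, and let $m=P(1)/P(2)$ (so $m>1$). Let $Q_1$ be a semi-distribution that agrees with $P$ on every item except item $1$, with $P(1)>Q_1(1)>0$, and let $m_1=P(1)/Q_1(1)$ (so $m_1>1$). Let $Q_2$ be a semi-distribution that agrees with $P$ on every item except item $2$, with $P(2)>Q_2(2)>0$, and let $m_2=P(2)/Q_2(2)$. Then $\mathrm{LogLoss}(Q_2\mid P)<\mathrm{LogLoss}(Q_1\mid P)$ whenever $m_2<m_1^{m}$.
   Context: A semi-distribution $Q$ on a finite item set $\mathcal{I}$ is a function $Q:\mathcal{I}\to[0,1]$ with $\sum_i Q(i)\le 1$; a probability distribution is one whose values sum to $1$. For a probability distribution $P$ and semi-distribution $Q$, $\mathrm{LogLoss}(Q\mid P):=\mathbb{E}_{o\sim P}[-\ln Q(o)]=-\sum_{i:P(i)>0}P(i)\ln Q(i)$. *)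

From HB Require Import structures.
From mathcomp Require Import all_boot all_order all_algebra.
From mathcomp Require Import all_classical all_reals all_analysis.
Set Implicit Arguments. Unset Strict Implicit. Unset Printing Implicit Defensive.
Import Order.TTheory GRing.Theory Num.Theory.
Local Open Scope ring_scope.

Definition is_distribution (R : realType) (I : finType) (P : I -> R) : Prop :=
  (forall i, 0 <= P i) /\ \sum_(i : I) P i = 1.

Definition is_semi_distribution (R : realType) (I : finType) (Q : I -> R) : Prop :=
  (forall i, 0 <= Q i <= 1) /\ \sum_(i : I) Q i <= 1.

Definition LogLoss (R : realType) (I : finType) (Q P : I -> R) : R :=
  - \sum_(i : I | 0 < P i) P i * ln (Q i).

(* Changing a single item k of P to Q k raises the log loss by exactly
   P k * ln (P k / Q k).  Hence LogLoss Q2 P < LogLoss Q1 P amounts to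
   P(2) ln m2 < P(1) ln m1 = P(2) * m ln m1, i.e. ln m2 < ln (m1 ^ m). *)
From mathcomp Require Import all_boot all_order all_algebra.
From mathcomp Require Import all_classical all_reals all_analysis.
From mathcomp Require Import lra.
Set Implicit Arguments. Unset Strict Implicit. Unset Printing Implicit Defensive.
Import Order.TTheory GRing.Theory Num.Theory.
Local Open Scope ring_scope.

Lemma LogLoss_point_update (R : realType) (I : finType) (k : I) (P Q : I -> R) :
  0 < P k -> 0 < Q k -> (forall i, i != k -> Q i = P i) ->
  LogLoss Q P = LogLoss P P + P k * ln (P k / Q k).
Proof.
move=> Pk_gt0 Qk_gt0 QP; rewrite /LogLoss (bigD1 k) //= [in RHS](bigD1 k) //=.
rewrite (eq_bigr (fun i => P i * ln (P i))); last first.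
  by move=> i /andP[_ /QP ->].
rewrite ln_div ?posrE // mulrBr.
set S := \sum_(i | _) _; lra.
Qed.

Lemma mul_ln_lt_of_lt_powR (R : realType) (a b x y : R) :
  0 < a -> 0 < b -> 0 < x -> 0 < y -> y < x `^ (a / b) -> b * ln y < a * ln x.
Proof.
move=> a_gt0 b_gt0 x_gt0 y_gt0 y_lt.
have : ln y < a / b * ln x.
  by rewrite -ln_powR ltr_ln ?posrE ?powR_gt0.
by rewrite -(ltr_pM2l b_gt0) mulrA mulrCA divff ?gt_eqF // mulr1.
Qed.

Theorem corollary1 (R : realType) (I : finType) (i1 i2 : I)
  (P Q1 Q2 : I -> R) :
  i1 != i2 ->
  is_distribution P ->
  P i1 > P i2 -> P i2 > 0 ->
  is_semi_distribution Q1 ->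
  (forall i, i != i1 -> Q1 i = P i) ->
  P i1 > Q1 i1 -> Q1 i1 > 0 ->
  is_semi_distribution Q2 ->
  (forall i, i != i2 -> Q2 i = P i) ->
  P i2 > Q2 i2 -> Q2 i2 > 0 ->
  let m := P i1 / P i2 in
  let m1 := P i1 / Q1 i1 in
  let m2 := P i2 / Q2 i2 in
  m2 < m1 `^ m ->
  LogLoss Q2 P < LogLoss Q1 P.
Proof.
move=> _ _ P21 P2_gt0 _ Q1P _ Q11_gt0 _ Q2P _ Q22_gt0 m m1 m2 m2_lt.
have P1_gt0 : 0 < P i1 by apply: lt_trans P21.
rewrite (LogLoss_point_update P1_gt0 Q11_gt0 Q1P).
rewrite (LogLoss_point_update P2_gt0 Q22_gt0 Q2P) ltrD2l.
by apply: mul_ln_lt_of_lt_powR m2_lt; rewrite ?divr_gt0.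
Qed.
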